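(* Let $0\to V\to (W,I)\xrightarrow{\sigma}(T,j)\to0$ be a short exact sequence of finite-dimensional complex vector spaces (complex-linear maps) with $\dim_\mathbb{C}T=1$, and let $\Omega$ be an alternating real trilinear form on $W$ such that (i) $\Omega(v_1,v_2,v_3)=0$ for all $v_1,v_2,v_3\in V$; (ii) $\Omega(\xi,\cdot,\cdot)|_V$ is non-degenerate for all $\xi\in W$ with $\sigma(\xi)\neq0$; (iii) $\Omega(I\xi,v_1,v_2)=-\Omega(\xi,v_1,Iv_2)$ for all $\xi\in W$, $v_1,v_2\in V$. Then $\dim_\mathbb{R}V=4n$ for some $n$ and there is a real basis $\{e_1,e_2,a_1^k,a_2^k,b_1^k,b_2^k\}_{k=1}^n$ of $W$ such that $T=\mathrm{span}_\mathbb{R}\{\sigma(e_1),\sigma(e_2)\}$, $V=\mathrm{span}_\mathbb{R}\{a_1^k,a_2^k,b_1^k,b_2^k\}_{k=1}^n$, $Ie_1=e_2$, $Ia_1^k=a_2^k$, $Ib_1^k=-b_2^k$, and, with $\{\epsilon_1,\epsilon_2,\alpha_1^k,\alpha_2^k,\beta_1^k,\beta_2^k\}$ the dual basis, $$\Omega=\sum_{k=1}^n\Big((\beta_1^k\wedge\alpha_1^k+\beta_2^k\wedge\alpha_2^k)\wedge\epsilon_2-(\beta_1^k\wedge\alpha_2^k-\beta_2^k\wedge\alpha_1^k)\wedge\epsilon_1\Big)+\nu\wedge\epsilon_1\wedge\epsilon_2$$ for some linear 1-form $\nu$ vanishing on $e_1,e_2$. *)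

From HB Require Import structures.
From mathcomp Require Import all_boot all_order all_algebra.
From mathcomp Require Import reals.
Set Implicit Arguments. Unset Strict Implicit. Unset Printing Implicit Defensive.
Import Order.TTheory GRing.Theory Num.Theory.
Local Open Scope ring_scope.

(* Vectors of W = R^m are row vectors 'rV[R]_m; linear maps act on the
   right: v |-> v *m M. *)

Section Defs.
Variable R : realType.

Definition trilinear (m : nat) (Om : 'rV[R]_m -> 'rV[R]_m -> 'rV[R]_m -> R) :=
  [/\ forall (a : R) x x' y z, Om (a *: x + x') y z = a * Om x y z + Om x' y z,
      forall (a : R) x y y' z, Om x (a *: y + y') z = a * Om x y z + Om x y' z
    & forall (a : R) x y z z', Om x y (a *: z + z') = a * Om x y z + Om x y z'].

Definition alternating3 (m : nat) (Om : 'rV[R]_m -> 'rV[R]_m -> 'rV[R]_m -> R) :=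
  forall x y z, [/\ Om x x z = 0, Om x y x = 0 & Om x y y = 0].

Definition ev (m : nat) (f : 'cV[R]_m) (x : 'rV[R]_m) : R := (x *m f) 0 0.

(* wedge product f /\ g /\ h of three 1-forms (determinant convention:
   (f/\g/\h)(x,y,z) = det [f,g,h applied to x,y,z]) *)
Definition wedge3 (m : nat) (f g h : 'cV[R]_m) (x y z : 'rV[R]_m) : R :=
    ev f x * ev g y * ev h z - ev f x * ev g z * ev h y
  - ev f y * ev g x * ev h z + ev f y * ev g z * ev h x
  + ev f z * ev g x * ev h y - ev f z * ev g y * ev h x.
End Defs.

(* Labels of the basis {e1, e2, a1^k, a2^k, b1^k, b2^k}_{k<n} :
   inl false = e1, inl true = e2,
   inr (k, 0) = a1^k, inr (k, 1) = a2^k, inr (k, 2) = b1^k, inr (k, 3) = b2^k. *)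
Definition lbl (n : nat) := (bool + 'I_n * 'I_4)%type.
Definition lE1 {n} : lbl n := inl false.
Definition lE2 {n} : lbl n := inl true.
Definition lA1 {n} (k : 'I_n) : lbl n := inr (k, @Ordinal 4 0 isT).
Definition lA2 {n} (k : 'I_n) : lbl n := inr (k, @Ordinal 4 1 isT).
Definition lB1 {n} (k : 'I_n) : lbl n := inr (k, @Ordinal 4 2 isT).
Definition lB2 {n} (k : 'I_n) : lbl n := inr (k, @Ordinal 4 3 isT).

(* Put [V = ker sigma], pick [e1] with [sigma e1 = (1, 0)] and set [e2 = I e1].  By (ii)
   and (iii) the 2-form [w = Om(e1, _, _)] is nondegenerate on [V] and satisfies
   [w(uI, v) = w(u, vI)] there, so a Darboux-type induction splits [V] into mutually
   [w]-orthogonal blocks [a, aI, b, -bI] with [w(a, b) = 0], [w(aI, b) = 1]; in particular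
   [dim V] is a multiple of 4.  Together with [e1, e2] these blocks form a basis of [W]
   whose dual basis is explicit, coordinates on [V] being read off with [w].  An
   alternating trilinear form on [W] is determined by its values on [V x V x V],
   [e1 x V x V], [e2 x V x V] and [e1 x e2 x V].  There [Om] agrees with the normal form:
   by (i) on the first, by the Gram matrix of [w] on the blocks on the second, by (iii),
   which turns [Om(e2, u, v)] into [- w(u, vI)], on the third, and by the choice
   [nu = Om(e1, e2, _)] on the last. *)

From HB Require Import structures.
From mathcomp Require Import all_boot all_order all_algebra.
From mathcomp Require Import reals.
From mathcomp Require Import ring lra.
Set Implicit Arguments. Unset Strict Implicit. Unset Printing Implicit Defensive.
Import Order.TTheory GRing.Theory Num.Theory.
Local Open Scope ring_scope.

Section LinearForms.
Variables (R : realType) (k : nat).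
Implicit Types (F : 'rV[R]_k -> R) (f : 'cV[R]_k) (x y : 'rV[R]_k).

Lemma lin0 F (hF : scalar F) : F 0 = 0.
Proof. by have := hF (-1) 0 0; rewrite scaler0 addr0 mulN1r addNr. Qed.

Lemma lin_eq0 F (hF : scalar F) x : x = 0 -> F x = 0.
Proof. by move=> ->; apply: lin0. Qed.

Lemma linD F (hF : scalar F) x y : F (x + y) = F x + F y.
Proof. by have := hF 1 x y; rewrite scale1r mul1r. Qed.

Lemma linZ F (hF : scalar F) a x : F (a *: x) = a * F x.
Proof. by have := hF a x 0; rewrite addr0 (lin0 hF) addr0. Qed.

Lemma linN F (hF : scalar F) x : F (- x) = - F x.
Proof. by rewrite -scaleN1r (linZ hF) mulN1r. Qed.

Lemma lin_sum F (hF : scalar F) (I : Type) (r : seq I) (P : pred I) (c : I -> R)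
    (g : I -> 'rV[R]_k) :
  F (\sum_(i <- r | P i) c i *: g i) = \sum_(i <- r | P i) c i * F (g i).
Proof.
elim/big_rec2: _ => [|i y1 y2 _ <-]; first exact: lin0.
by rewrite hF.
Qed.

Lemma ev_scalar f : scalar (ev f).
Proof. by move=> a x y; rewrite /ev mulmxDl -scalemxAl !mxE. Qed.

Lemma ev_addf f f' x : ev (f + f') x = ev f x + ev f' x.
Proof. by rewrite /ev mulmxDr mxE. Qed.

Lemma ev_scalef a f x : ev (a *: f) x = a * ev f x.
Proof. by rewrite /ev -scalemxAr mxE. Qed.

Lemma ev_mulmx m (A : 'M[R]_(k, m)) (f : 'cV[R]_m) x : ev (A *m f) x = ev f (x *m A).
Proof. by rewrite /ev mulmxA. Qed.

Lemma ev_col m (A : 'M[R]_(k, m)) i x : ev (col i A) x = (x *m A) 0 i.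
Proof. by rewrite /ev !mxE; apply: eq_bigr => l _; rewrite mxE. Qed.

Definition forms_mx n (F : 'I_n -> 'rV[R]_k -> R) : 'M[R]_(k, n) :=
  \matrix_(i, t) F t (delta_mx 0 i).

Lemma mul_forms_mx n (F : 'I_n -> 'rV[R]_k -> R) x :
  (forall t, scalar (F t)) -> x *m forms_mx F = \row_t F t x.
Proof.
move=> hF; apply/rowP => t; rewrite [RHS]mxE [in RHS](row_sum_delta x).
by rewrite (lin_sum (hF t)) mxE; apply: eq_bigr => i _; rewrite mxE.
Qed.

Definition forms_ker n (F : 'I_n -> 'rV[R]_k -> R) : {vspace 'rV[R]_k} :=
  lker (linfun (mulmxr (forms_mx F))).

Lemma mem_forms_ker n (F : 'I_n -> 'rV[R]_k -> R) x :
  (forall t, scalar (F t)) -> (x \in forms_ker F) = [forall t, F t x == 0].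
Proof.
move=> hF; rewrite memv_ker lfunE /= mul_forms_mx //.
apply/eqP/forallP => [/rowP h t | h]; first by have := h t; rewrite !mxE => ->.
by apply/rowP => t; rewrite !mxE; apply/eqP.
Qed.

Definition form_col F : 'cV[R]_k := forms_mx (fun _ : 'I_1 => F).

Lemma ev_form_col F (hF : scalar F) x : ev (form_col F) x = F x.
Proof. by rewrite /ev mul_forms_mx // mxE. Qed.

Lemma sum_mul_delta n (c : 'I_n -> R) (i : 'I_n) : \sum_(j < n) c j * (j == i)%:R = c i.
Proof.
rewrite (bigD1 i) //= eqxx mulr1 big1 ?addr0 // => j /negbTE ->.
by rewrite mulr0.
Qed.

Lemma free_of_duals (T : eqType) (t0 : T) (E : seq T) (vec : T -> 'rV[R]_k)
    (dual : T -> 'cV[R]_k) :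
  uniq E -> {in E &, forall l l', ev (dual l') (vec l) = (l == l')%:R} ->
  free (map vec E).
Proof.
move=> uE Hd; rewrite -[map vec E]/(tval (in_tuple (map vec E))).
apply/freeP => c Hc i; have hi : (i < size E)%N by rewrite -(size_map vec).
have := congr1 (ev (dual (nth t0 E i))) Hc.
rewrite (lin0 (ev_scalar _)) (lin_sum (ev_scalar _)).
rewrite (eq_bigr (fun j => c j * (j == i)%:R)) ?sum_mul_delta // => j _.
have hj : (j < size E)%N by rewrite -(size_map vec).
by rewrite /= (nth_map t0) // Hd ?mem_nth // nth_uniq.
Qed.

Lemma scalar_span_eq0 F (hF : scalar F) (X : seq 'rV[R]_k) x :
  {in X, forall g, F g = 0} -> x \in <<X>>%VS -> F x = 0.
Proof.
move=> HX; rewrite -[X]/(tval (in_tuple X)) => /coord_span ->.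
by rewrite (lin_sum hF) big1 // => i _; rewrite HX ?mulr0 // mem_nth.
Qed.

Lemma bilinear_span_eq0 (B : 'rV[R]_k -> 'rV[R]_k -> R) (X : seq 'rV[R]_k) x y :
  (forall x, scalar (B x)) -> (forall y, scalar (B^~ y)) ->
  {in X &, forall g g', B g g' = 0} -> x \in <<X>>%VS -> y \in <<X>>%VS -> B x y = 0.
Proof.
move=> hr hl HX hx; apply: (scalar_span_eq0 (hr x)) => g' hg'.
by apply: (scalar_span_eq0 (hl g')) hx => g hg; apply: HX.
Qed.

End LinearForms.

Section TrilinearForms.
Variables (R : realType) (k : nat).
Local Notation form3 := ('rV[R]_k -> 'rV[R]_k -> 'rV[R]_k -> R).
Implicit Types (H G : form3) (x y z : 'rV[R]_k).

Lemma trilinear_add H G :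
  trilinear H -> trilinear G -> trilinear (fun x y z => H x y z + G x y z).
Proof.
by case=> h1 h2 h3 [g1 g2 g3]; split=> *;
  rewrite ?(h1, g1, h2, g2, h3, g3) mulrDr addrACA.
Qed.

Lemma trilinear_sub H G :
  trilinear H -> trilinear G -> trilinear (fun x y z => H x y z - G x y z).
Proof.
by case=> h1 h2 h3 [g1 g2 g3]; split=> *;
  rewrite ?(h1, g1, h2, g2, h3, g3) mulrBr opprD addrACA.
Qed.

Lemma trilinear_sum n (H : 'I_n -> form3) :
  (forall i, trilinear (H i)) -> trilinear (fun x y z => \sum_(i < n) H i x y z).
Proof.
move=> hH; split=> *; rewrite mulr_sumr -big_split; apply: eq_bigr => i _;
  by case: (hH i) => h1 h2 h3; rewrite ?(h1, h2, h3).
Qed.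

Lemma alternating3_add H G :
  alternating3 H -> alternating3 G -> alternating3 (fun x y z => H x y z + G x y z).
Proof.
by move=> hH hG x y z; case: (hH x y z) => -> -> ->; case: (hG x y z) => -> -> ->;
  rewrite addr0.
Qed.

Lemma alternating3_sub H G :
  alternating3 H -> alternating3 G -> alternating3 (fun x y z => H x y z - G x y z).
Proof.
by move=> hH hG x y z; case: (hH x y z) => -> -> ->; case: (hG x y z) => -> -> ->;
  rewrite subrr.
Qed.

Lemma alternating3_sum n (H : 'I_n -> form3) :
  (forall i, alternating3 (H i)) -> alternating3 (fun x y z => \sum_(i < n) H i x y z).
Proof. by move=> hH x y z; split; apply: big1 => i _; case: (hH i x y z). Qed.

Lemma trilinear_wedge3 (f g h : 'cV[R]_k) : trilinear (wedge3 f g h).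
Proof. by split=> *; rewrite /wedge3 !(ev_scalar _ _ _ _); ring. Qed.

Lemma alternating3_wedge3 (f g h : 'cV[R]_k) : alternating3 (wedge3 f g h).
Proof. by move=> x y z; split; rewrite /wedge3; ring. Qed.

Definition wedge2 (f g : 'cV[R]_k) x y := ev f x * ev g y - ev f y * ev g x.

Lemma wedge3_eq0 (f g h : 'cV[R]_k) x y z :
  ev h x = 0 -> ev h y = 0 -> ev h z = 0 -> wedge3 f g h x y z = 0.
Proof. by move=> hx hy hz; rewrite /wedge3 hx hy hz; ring. Qed.

Lemma wedge3_expand1 (f g h : 'cV[R]_k) x y z :
  ev h y = 0 -> ev h z = 0 -> wedge3 f g h x y z = ev h x * wedge2 f g y z.
Proof. by move=> hy hz; rewrite /wedge3 /wedge2 hy hz; ring. Qed.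

Section Alternating.
Variable H : form3.
Hypotheses (Htri : trilinear H) (Halt : alternating3 H).

Lemma trilinear1 y z : scalar (fun x => H x y z).
Proof. by case: Htri => h _ _ a x x'; exact: h. Qed.
Lemma trilinear2 x z : scalar (H x^~ z).
Proof. by case: Htri => _ h _ a y y'; exact: h. Qed.
Lemma trilinear3 x y : scalar (H x y).
Proof. by case: Htri => _ _ h a z z'; exact: h. Qed.

Lemma alternating3_diag12 x z : H x x z = 0. Proof. by case: (Halt x x z). Qed.
Lemma alternating3_diag13 x y : H x y x = 0. Proof. by case: (Halt x y x). Qed.
Lemma alternating3_diag23 x y : H x y y = 0. Proof. by case: (Halt x y y). Qed.

Lemma trilinearD1 x x' y z : H (x + x') y z = H x y z + H x' y z.
Proof. exact: (linD (trilinear1 y z) x x'). Qed.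
Lemma trilinearD2 x y y' z : H x (y + y') z = H x y z + H x y' z.
Proof. exact: (linD (trilinear2 x z) y y'). Qed.
Lemma trilinearD3 x y z z' : H x y (z + z') = H x y z + H x y z'.
Proof. exact: (linD (trilinear3 x y) z z'). Qed.

Lemma trilinearZ3 x y a z : H x y (a *: z) = a * H x y z.
Proof. exact: (linZ (trilinear3 x y) a z). Qed.

Lemma alternating3_swap12 x y z : H x y z = - H y x z.
Proof.
have := alternating3_diag12 (x + y) z.
rewrite trilinearD1 !trilinearD2 !alternating3_diag12 add0r addr0 => /eqP.
by rewrite addr_eq0 => /eqP.
Qed.

Lemma alternating3_swap23 x y z : H x y z = - H x z y.
Proof.
have := alternating3_diag23 x (y + z).
rewrite trilinearD2 !trilinearD3 !alternating3_diag23 add0r addr0 => /eqP.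
by rewrite addr_eq0 => /eqP.
Qed.

Variables (e1 e2 : 'rV[R]_k) (V : {vspace 'rV[R]_k}).
Hypothesis decomp : forall x, exists c1 c2 v, v \in V /\ x = c1 *: e1 + c2 *: e2 + v.

Lemma scalar_eq0_decomp F (hF : scalar F) x :
  F e1 = 0 -> F e2 = 0 -> {in V, forall v, F v = 0} -> F x = 0.
Proof.
move=> h1 h2 hV; have [c1 [c2 [v [vV ->]]]] := decomp x.
by rewrite !(linD hF) !(linZ hF) h1 h2 hV // !mulr0 !addr0.
Qed.

Hypotheses (HVVV : {in V & V & V, forall u v w, H u v w = 0})
  (H1VV : {in V &, forall v w, H e1 v w = 0})
  (H2VV : {in V &, forall v w, H e2 v w = 0})
  (H12V : {in V, forall v, H e1 e2 v = 0}).

Lemma alternating3_eq0_decomp x y z : H x y z = 0.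
Proof.
have HxVV x' : {in V &, forall v w, H x' v w = 0}.
  move=> v w vV wV; apply: (scalar_eq0_decomp (trilinear1 v w)) => [||u uV].
  - exact: H1VV.
  - exact: H2VV.
  - exact: HVVV.
have HxyV x' y' : {in V, forall v, H x' y' v = 0}.
  move=> v vV; apply: (scalar_eq0_decomp (trilinear2 x' v)) => [||u uV]; last exact: HxVV.
  - apply: (scalar_eq0_decomp (trilinear1 e1 v)) => [||u uV].
    + exact: alternating3_diag12.
    + by rewrite alternating3_swap12 H12V ?oppr0.
    + by rewrite alternating3_swap12 HxVV ?oppr0.
  - apply: (scalar_eq0_decomp (trilinear1 e2 v)) => [||u uV].
    + exact: H12V.
    + exact: alternating3_diag12.
    + by rewrite alternating3_swap12 HxVV ?oppr0.
have Hx12 x' : H x' e1 e2 = 0.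
  apply: (scalar_eq0_decomp (trilinear1 e1 e2)) => [||v vV].
  - exact: alternating3_diag12.
  - exact: alternating3_diag13.
  - by rewrite alternating3_swap12 alternating3_swap23 opprK H12V.
apply: (scalar_eq0_decomp (trilinear3 x y)) => [||v vV]; last exact: HxyV.
- apply: (scalar_eq0_decomp (trilinear2 x e1)) => [||v vV].
  + exact: alternating3_diag23.
  + by rewrite alternating3_swap23 Hx12 oppr0.
  + by rewrite alternating3_swap23 HxyV ?oppr0.
- apply: (scalar_eq0_decomp (trilinear2 x e2)) => [||v vV].
  + exact: Hx12.
  + exact: alternating3_diag23.
  + by rewrite alternating3_swap23 HxyV ?oppr0.
Qed.

End Alternating.
End TrilinearForms.

Local Notation ord4 i := (@Ordinal 4 i isT).

Section BlockIndices.
Variable R : realType.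

Definition partner (t : 'I_4) : 'I_4 :=
  match val t with 0%N => ord4 3 | 1%N => ord4 2 | 2%N => ord4 1 | _ => ord4 0 end.
Definition partner_sign (t : 'I_4) : R :=
  match val t with 0%N => 1 | 1%N => -1 | 2%N => 1 | _ => -1 end.
Definition gram (t t' : 'I_4) : R := partner_sign t' * (t' == partner t)%:R.

Definition mulI_index (t : 'I_4) : 'I_4 :=
  match val t with 0%N => ord4 1 | 1%N => ord4 0 | 2%N => ord4 3 | _ => ord4 2 end.
Definition mulI_sign (t : 'I_4) : R :=
  match val t with 0%N => 1 | 1%N => -1 | 2%N => -1 | _ => 1 end.

(* The value of the 2-form [e_t1^* /\ e_t2^*] on [(e_t, e_t')]. *)
Definition delta_wedge (t1 t2 t t' : 'I_4) : R :=
  (t == t1)%:R * (t' == t2)%:R - (t' == t1)%:R * (t == t2)%:R.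

Lemma partnerK : involutive partner.
Proof. by case=> [[|[|[|[|t]]]] ht] //; apply/val_inj. Qed.

Lemma partner_sign_sqr t : partner_sign t * partner_sign t = 1.
Proof. by case: t => [[|[|[|[|t]]]] ht] //=; rewrite ?mulrNN mulr1. Qed.

Lemma gramE t t' :
  gram t t' = delta_wedge (ord4 3) (ord4 0) t t' - delta_wedge (ord4 2) (ord4 1) t t'.
Proof.
by case: t => [[|[|[|[|t]]]] ht] //; case: t' => [[|[|[|[|t']]]] ht'] //;
  rewrite /gram /delta_wedge /partner_sign /partner /=; lra.
Qed.

Lemma gram_mulIE t t' :
  mulI_sign t' * gram t (mulI_index t') =
    - delta_wedge (ord4 2) (ord4 0) t t' - delta_wedge (ord4 3) (ord4 1) t t'.
Proof.
by case: t => [[|[|[|[|t]]]] ht] //; case: t' => [[|[|[|[|t']]]] ht'] //;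
  rewrite /gram /delta_wedge /mulI_sign /mulI_index /partner_sign /partner /=; lra.
Qed.

End BlockIndices.

Arguments partner_sign {R}.
Arguments gram {R}.
Arguments mulI_sign {R}.
Arguments delta_wedge {R}.

Section Darboux.
Variables (R : realType) (m : nat) (I : 'M[R]_m) (w : 'rV[R]_m -> 'rV[R]_m -> R)
  (V : {vspace 'rV[R]_m}).
Hypotheses (I_sqr : I *m I = - 1%:M)
  (w_linl : forall y, scalar (w^~ y)) (w_linr : forall x, scalar (w x))
  (w_alt : forall x, w x x = 0)
  (V_mulI : forall v, v \in V -> v *m I \in V)
  (w_mulI : {in V &, forall u v, w (u *m I) v = w u (v *m I)}).

Lemma mulmxII (u : 'rV[R]_m) : u *m I *m I = - u.
Proof. by rewrite -mulmxA I_sqr mulmxN mulmx1. Qed.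

Lemma wDl x x' y : w (x + x') y = w x y + w x' y. Proof. exact: (linD (w_linl y) x x'). Qed.
Lemma wDr x y y' : w x (y + y') = w x y + w x y'. Proof. exact: (linD (w_linr x) y y'). Qed.
Lemma wZl a x y : w (a *: x) y = a * w x y. Proof. exact: (linZ (w_linl y) a x). Qed.
Lemma wZr a x y : w x (a *: y) = a * w x y. Proof. exact: (linZ (w_linr x) a y). Qed.
Lemma wNl x y : w (- x) y = - w x y. Proof. exact: (linN (w_linl y) x). Qed.
Lemma wNr x y : w x (- y) = - w x y. Proof. exact: (linN (w_linr x) y). Qed.

Lemma w_skew x y : w x y = - w y x.
Proof.
have := w_alt (x + y); rewrite wDl !wDr !w_alt add0r addr0 => /eqP.
by rewrite addr_eq0 => /eqP.
Qed.

Lemma w_mulI_diag u : u \in V -> w u (u *m I) = 0.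
Proof.
move=> hu; apply/eqP; have /eqP := w_mulI hu hu.
by rewrite w_skew eq_sym -addr_eq0 -mulr2n mulrn_eq0.
Qed.

Lemma w_mulII u v : u \in V -> v \in V -> w (u *m I) (v *m I) = - w u v.
Proof. by move=> hu hv; rewrite w_mulI ?V_mulI // mulmxII wNr. Qed.

(* The paper's [a_1, a_2, b_1, b_2] = [a, aI, b, -bI]. *)
Definition blk (ab : 'rV[R]_m * 'rV[R]_m) (t : 'I_4) : 'rV[R]_m :=
  match val t with 0%N => ab.1 | 1%N => ab.1 *m I | 2%N => ab.2 | _ => - (ab.2 *m I) end.

Lemma blk_mulI ab t : blk ab t *m I = mulI_sign t *: blk ab (mulI_index t).
Proof.
by case: t => [[|[|[|[|t]]]] ht] //; rewrite /blk /= ?scale1r ?scaleN1r ?mulNmx ?mulmxII ?opprK.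
Qed.

Definition darboux_pair a b := [/\ a \in V, b \in V, w a b = 0 & w (a *m I) b = 1].

Lemma blk_table a b t t' : darboux_pair a b -> w (blk (a, b) t) (blk (a, b) t') = gram t t'.
Proof.
case=> ha hb hab haIb.
have habI : w a (b *m I) = 1 by rewrite -w_mulI.
have haIbI : w (a *m I) (b *m I) = 0 by rewrite w_mulII // hab oppr0.
have hbbI : w b (b *m I) = 0 by rewrite w_mulI_diag.
have haaI : w a (a *m I) = 0 by rewrite w_mulI_diag.
case: t => [[|[|[|[|t]]]] ht] //; case: t' => [[|[|[|[|t']]]] ht'] //;
  rewrite /blk /gram /partner_sign /partner /= ?wNl ?wNr ?w_alt;
  rewrite ?(hab, haIb, habI, haIbI, hbbI, haaI) ?(w_skew b) ?(w_skew (b *m I));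
  rewrite ?(hab, haIb, habI, haIbI, hbbI, haaI, w_skew (a *m I) a); lra.
Qed.

(* [w] pairs [blk ab t] with [blk ab (partner t)] only, so this is the [blk ab t]-coordinate
   of [u] (see [w_blk_proj]). *)
Definition blk_coord ab t u := partner_sign t * w (blk ab (partner t)) u.

Lemma scalar_blk_coord ab t : scalar (blk_coord ab t).
Proof. by move=> c x y; rewrite /blk_coord (w_linr _ c x y) mulrDr mulrCA. Qed.

Definition blk_proj ab u := \sum_(t < 4) blk_coord ab t u *: blk ab t.

Lemma w_blk_proj a b t u :
  darboux_pair a b -> w (blk (a, b) t) (blk_proj (a, b) u) = w (blk (a, b) t) u.
Proof.
move=> hab; rewrite /blk_proj (lin_sum (w_linr _)).
under eq_bigr => t' _ do rewrite blk_table // /blk_coord /gram mulrACA partner_sign_sqr mul1r.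
by rewrite sum_mul_delta partnerK.
Qed.

Definition w_nondeg (U : {vspace 'rV[R]_m}) :=
  {in U, forall u, {in U, forall v, w u v = 0} -> u = 0}.

Lemma darboux_pair_exists (U : {vspace 'rV[R]_m}) a :
  (U <= V)%VS -> (forall u, u \in U -> u *m I \in U) -> w_nondeg U ->
  a \in U -> a != 0 -> exists2 b, b \in U & darboux_pair a b.
Proof.
move=> /subvP UV U_mulI hnd aU anz.
have /allPn[v /vbasis_mem vU hav] : ~~ all (fun v => w a v == 0) (vbasis U).
  apply: contra anz => /allP h0; apply/eqP/hnd => // v vU.
  apply: (scalar_span_eq0 (w_linr a)) => [g /h0 /eqP //|].
  by rewrite (span_basis (vbasisP U)).
set al := w a v; set be := w a (v *m I); set D := al ^+ 2 + be ^+ 2.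
have Dnz : D != 0.
  by rewrite paddr_eq0 ?sqr_ge0 // negb_and sqrf_eq0 hav.
exists ((be / D) *: v - (al / D) *: (v *m I)); first by rewrite rpredB ?rpredZ ?U_mulI.
split; rewrite ?UV ?rpredB ?rpredZ ?U_mulI // wDr wNr !wZr.
- by rewrite -/al -/be; ring.
- rewrite w_mulI ?w_mulII ?UV ?U_mulI // -/al -/be.
  by move: Dnz; rewrite /D => Dnz; field.
Qed.

Section OrthogonalComplement.
Variables (U : {vspace 'rV[R]_m}) (a b : 'rV[R]_m).
Hypotheses (UV : (U <= V)%VS) (U_mulI : forall u, u \in U -> u *m I \in U)
  (aU : a \in U) (bU : b \in U) (hab : darboux_pair a b).

Definition blk_orth := (U :&: forms_ker (fun t => w (blk (a, b) t)))%VS.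

Lemma mem_blk_orth u : (u \in blk_orth) = (u \in U) && [forall t, w (blk (a, b) t) u == 0].
Proof. by rewrite memv_cap mem_forms_ker. Qed.

Lemma blk_in t : blk (a, b) t \in U.
Proof. by case: t => [[|[|[|[|t]]]] ht] //; rewrite /blk /= ?rpredN U_mulI. Qed.

Lemma sub_blk_proj_orth u : u \in U -> u - blk_proj (a, b) u \in blk_orth.
Proof.
move=> uU; rewrite mem_blk_orth rpredB ?rpred_sum // => [|t _]; last by rewrite rpredZ ?blk_in.
by apply/forallP => t; rewrite wDr wNr w_blk_proj // subrr.
Qed.

Lemma blk_orth_mulI u : u \in blk_orth -> u *m I \in blk_orth.
Proof.
rewrite !mem_blk_orth => /andP[uU /forallP h0]; rewrite U_mulI //=.
apply/forallP => t; rewrite -w_mulI ?(subvP UV) ?blk_in // blk_mulI wZl.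
by rewrite (eqP (h0 _)) mulr0.
Qed.

Lemma blk_orth_nondeg : w_nondeg U -> w_nondeg blk_orth.
Proof.
move=> hnd u; rewrite mem_blk_orth => /andP[uU /forallP h0] hu; apply: hnd => // z zU.
rewrite -(subrK (blk_proj (a, b) z) z) wDr hu ?sub_blk_proj_orth // add0r.
rewrite (lin_sum (w_linr _)) big1 // => t _.
by rewrite w_skew (eqP (h0 t)) oppr0 mulr0.
Qed.

Lemma blk_orth_dim : (\dim blk_orth < \dim U)%N.
Proof.
have aO : a \notin blk_orth.
  rewrite mem_blk_orth aU; apply/forallP => /(_ (ord4 3)).
  by rewrite -[a]/(blk (a, b) (ord4 0)) blk_table // /gram /partner_sign /= mulr1 oner_eq0.
rewrite (ltn_leqif (dimv_leqif_eq (capvSl _ _))).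
by apply: contraNneq aO; rewrite /blk_orth => ->.
Qed.

Lemma sub_span_blk_orth u :
  u \in U -> u \in (<<[seq blk (a, b) t | t : 'I_4]>> + blk_orth)%VS.
Proof.
move=> uU; rewrite -(subrK (blk_proj (a, b) u) u) addrC memv_add ?sub_blk_proj_orth //.
by rewrite rpred_sum // => t _; rewrite rpredZ // memv_span // image_f.
Qed.

End OrthogonalComplement.

Definition blk_at (s : seq ('rV[R]_m * 'rV[R]_m)) : 'I_(size s) * 'I_4 -> 'rV[R]_m :=
  fun p => blk (nth (0, 0) s p.1) p.2.
Arguments blk_at : clear implicits.

Lemma darboux (U : {vspace 'rV[R]_m}) :
  (U <= V)%VS -> (forall u, u \in U -> u *m I \in U) -> w_nondeg U ->
  exists s : seq ('rV[R]_m * 'rV[R]_m),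
    [/\ (forall p, blk_at s p \in U),
         (U <= <<[seq blk_at s p | p : 'I_(size s) * 'I_4]>>)%VS &
         (forall p p', w (blk_at s p) (blk_at s p') = (p.1 == p'.1)%:R * gram p.2 p'.2)].
Proof.
have [d] := ubnP (\dim U); elim: d U => // d IH U dimU UV U_mulI hnd.
have [->|Unz] := eqVneq U 0%VS.
  by exists [::]; split=> [[[]] | | [[]]]; rewrite ?sub0v.
have [a aU anz] : exists2 a, a \in U & a != 0 by exists (vpick U); rewrite ?memv_pick ?vpick0.
have [b bU hab] := darboux_pair_exists UV U_mulI hnd aU anz.
have OU : (blk_orth U a b <= U)%VS := capvSl _ _.
have dimO : (\dim (blk_orth U a b) < d)%N := leq_trans (blk_orth_dim aU hab) dimU.
have [s [s_in s_span s_tab]] := IH _ dimO (subv_trans OU UV) (blk_orth_mulI UV U_mulI aU bU)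
  (blk_orth_nondeg U_mulI aU bU hab hnd).
exists ((a, b) :: s); split.
- by case=> [[[|i] hi] t]; [exact: blk_in | exact: (subvP OU) (s_in (@Ordinal (size s) i hi, t))].
- apply/subvP => u /(sub_span_blk_orth U_mulI aU bU hab); apply: subvP.
  rewrite subv_add; apply/andP; split.
    apply/span_subvP => _ /imageP[t _ ->].
    by rewrite -[blk _ _]/(blk_at ((a, b) :: s) (ord0, t)) memv_span ?image_f.
  apply: (subv_trans s_span); apply/span_subvP => _ /imageP[[i t] _ ->].
  by rewrite -[blk_at s _]/(blk_at ((a, b) :: s) (lift ord0 i, t)) memv_span ?image_f.
have orthO p t : w (blk (a, b) t) (blk_at s p) = 0.
  by move: (s_in p); rewrite mem_blk_orth => /andP[_ /forallP/(_ t)/eqP].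
case=> [[[|i] hi] t] [[[|j] hj] t'] /=.
- by rewrite mul1r blk_table.
- by rewrite mul0r (orthO (@Ordinal (size s) j hj, t')).
- by rewrite mul0r w_skew (orthO (@Ordinal (size s) i hi, t)) oppr0.
- exact: (s_tab (@Ordinal (size s) i hi, t) (@Ordinal (size s) j hj, t')).
Qed.

End Darboux.
Arguments blk_at {R m} I s p.

Lemma mx2_sqrN1_offdiag_neq0 (R : realType) (j : 'M[R]_2) : j *m j = - 1%:M -> j 0 1 != 0.
Proof.
move=> /matrixP/(_ 0 0); rewrite !mxE big_ord_recr big_ord1 /= mulr1n.
have -> : widen_ord (leqnSn 1) ord0 = 0 :> 'I_2 by apply/val_inj.
have -> : ord_max = 1 :> 'I_2 by apply/val_inj.
move=> jj; apply/eqP => j01; move: jj; rewrite j01 mul0r addr0 -expr2.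
by have := sqr_ge0 (j 0 0); lra.
Qed.

Section Setting.
Variables (R : realType) (m : nat) (I : 'M[R]_m) (j : 'M[R]_2) (sigma : 'M[R]_(m, 2))
  (Om : 'rV[R]_m -> 'rV[R]_m -> 'rV[R]_m -> R).
Hypotheses (I_sqr : I *m I = - 1%:M) (j_sqr : j *m j = - 1%:M)
  (sigma_mulI : I *m sigma = sigma *m j) (sigma_full : row_full sigma)
  (Om_tri : trilinear Om) (Om_alt : alternating3 Om)
  (Om_ker : forall v1 v2 v3, v1 *m sigma = 0 -> v2 *m sigma = 0 -> v3 *m sigma = 0 ->
     Om v1 v2 v3 = 0)
  (Om_nondeg : forall xi, xi *m sigma != 0 -> forall v1, v1 *m sigma = 0 ->
     (forall v2, v2 *m sigma = 0 -> Om xi v1 v2 = 0) -> v1 = 0)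
  (Om_mulI : forall xi v1 v2, v1 *m sigma = 0 -> v2 *m sigma = 0 ->
     Om (xi *m I) v1 v2 = - Om xi v1 (v2 *m I)).

Definition V : {vspace 'rV[R]_m} := lker (linfun (mulmxr sigma)).

Lemma memV x : (x \in V) = (x *m sigma == 0).
Proof. by rewrite memv_ker lfunE. Qed.

Lemma V_mulI v : v \in V -> v *m I \in V.
Proof. by rewrite !memV -mulmxA sigma_mulI mulmxA => /eqP ->; rewrite mul0mx. Qed.

Definition e1 : 'rV[R]_m := delta_mx 0 0 *m pinvmx sigma.
Definition e2 : 'rV[R]_m := e1 *m I.

Lemma e1_sigma : e1 *m sigma = delta_mx 0 0.
Proof. exact/mulmxKpV/submx_full. Qed.

Lemma e2_sigma : e2 *m sigma = row 0 j.
Proof. by rewrite /e2 -mulmxA sigma_mulI mulmxA e1_sigma -rowE. Qed.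

Lemma j01_neq0 : j 0 1 != 0.
Proof. exact: mx2_sqrN1_offdiag_neq0. Qed.

(* The dual basis of [(sigma e1, sigma e2) = ((1, 0), (j 0 0, j 0 1))] of [T]. *)
Definition tau1 : 'cV[R]_2 := col 0 1%:M - (j 0 0 / j 0 1) *: col 1 1%:M.
Definition tau2 : 'cV[R]_2 := (j 0 1)^-1 *: col 1 1%:M.

Lemma ev_tau1 y : ev tau1 y = y 0 0 - j 0 0 / j 0 1 * y 0 1.
Proof. by rewrite /tau1 -scaleNr ev_addf ev_scalef !ev_col !mulmx1 mulNr. Qed.

Lemma ev_tau2 y : ev tau2 y = (j 0 1)^-1 * y 0 1.
Proof. by rewrite /tau2 ev_scalef ev_col mulmx1. Qed.

Lemma tau1_e1 : ev tau1 (e1 *m sigma) = 1.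
Proof. by rewrite ev_tau1 e1_sigma !mxE /= mulr0 subr0. Qed.

Lemma tau2_e1 : ev tau2 (e1 *m sigma) = 0.
Proof. by rewrite ev_tau2 e1_sigma !mxE /= mulr0. Qed.

Lemma tau1_e2 : ev tau1 (e2 *m sigma) = 0.
Proof. by rewrite ev_tau1 e2_sigma !mxE divfK ?j01_neq0 // subrr. Qed.

Lemma tau2_e2 : ev tau2 (e2 *m sigma) = 1.
Proof. by rewrite ev_tau2 e2_sigma !mxE mulVf ?j01_neq0. Qed.

Definition eps1 : 'cV[R]_m := sigma *m tau1.
Definition eps2 : 'cV[R]_m := sigma *m tau2.

Lemma eps1_V v : v \in V -> ev eps1 v = 0.
Proof. by rewrite memV /eps1 ev_mulmx => /eqP ->; rewrite ev_tau1 !mxE mulr0 subr0. Qed.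

Lemma eps2_V v : v \in V -> ev eps2 v = 0.
Proof. by rewrite memV /eps2 ev_mulmx => /eqP ->; rewrite ev_tau2 !mxE mulr0. Qed.

Definition P x := x - (ev eps1 x *: e1 + ev eps2 x *: e2).

Lemma P_V x : P x \in V.
Proof.
rewrite memV /P mulmxBl mulmxDl -!scalemxAl e1_sigma e2_sigma /eps1 /eps2 !ev_mulmx.
rewrite ev_tau1 ev_tau2.
move: (x *m sigma) => y; have q_neq0 := j01_neq0; apply/eqP/rowP => i.
have [->|->] : i = 0 \/ i = 1 by case: i => -[|[|//]] hi; [left|right]; apply/val_inj.
  by rewrite !mxE /=; field.
by rewrite !mxE /=; field.
Qed.

Lemma P_id v : v \in V -> P v = v.
Proof. by move=> vV; rewrite /P eps1_V // eps2_V // !scale0r addr0 subr0. Qed.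

Lemma P_e1 : P e1 = 0.
Proof. by rewrite /P /eps1 /eps2 !ev_mulmx tau1_e1 tau2_e1 scale1r scale0r addr0 subrr. Qed.

Lemma P_e2 : P e2 = 0.
Proof. by rewrite /P /eps1 /eps2 !ev_mulmx tau1_e2 tau2_e2 scale1r scale0r add0r subrr. Qed.

Lemma decomp_e12 x : x = ev eps1 x *: e1 + ev eps2 x *: e2 + P x.
Proof. by rewrite /P addrC subrK. Qed.

Lemma scalar_comp_P F : scalar F -> scalar (fun x => F (P x)).
Proof.
move=> hF a x y; rewrite -hF; congr F; rewrite /P !(ev_scalar _ _ _ _).
by apply/rowP => i; rewrite !mxE; ring.
Qed.

Lemma Om_e1_mulI : {in V &, forall u v, Om e1 (u *m I) v = Om e1 u (v *m I)}.
Proof.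
move=> u v; rewrite !memV => /eqP uV /eqP vV.
rewrite (alternating3_swap23 Om_tri Om_alt e1 (u *m I)) -Om_mulI //.
by rewrite (alternating3_swap23 Om_tri Om_alt (e1 *m I)) Om_mulI // opprK.
Qed.

Lemma Om_e1_nondeg : w_nondeg (Om e1) V.
Proof.
have e1_notV : e1 *m sigma != 0.
  by rewrite e1_sigma; apply/eqP => /matrixP/(_ 0 0)/eqP; rewrite !mxE /= oner_eq0.
move=> u; rewrite memV => /eqP uV hu; apply: (Om_nondeg e1_notV uV) => v vV.
by apply: hu; rewrite memV vV.
Qed.

Lemma darboux_V : exists s : seq ('rV[R]_m * 'rV[R]_m),
  [/\ (forall p, blk_at I s p \in V),
      (V <= <<[seq blk_at I s p | p : 'I_(size s) * 'I_4]>>)%VS &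
      (forall p p', Om e1 (blk_at I s p) (blk_at I s p') = (p.1 == p'.1)%:R * gram p.2 p'.2)].
Proof.
exact: (darboux I_sqr (trilinear2 Om_tri e1) (trilinear3 Om_tri e1)
  (alternating3_diag23 Om_alt e1) V_mulI Om_e1_mulI (subvv V) V_mulI Om_e1_nondeg).
Qed.

Lemma image_basis : basis_of fullv [:: e1 *m sigma; e2 *m sigma].
Proof.
rewrite basisEfree subvf dimvf /dim /= mul1n leqnn andbT.
rewrite -[[:: _; _]]/(map (fun b : bool => (if b then e2 else e1) *m sigma) [:: false; true]).
apply: (free_of_duals false (dual := fun b : bool => if b then tau2 else tau1)) => // - [] [] _ _.
all: by rewrite /= ?tau1_e1 ?tau2_e1 ?tau1_e2 ?tau2_e2.
Qed.

Section NormalBasis.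
Variable s : seq ('rV[R]_m * 'rV[R]_m).
Hypotheses (s_in : forall p, blk_at I s p \in V)
  (s_span : (V <= <<[seq blk_at I s p | p : 'I_(size s) * 'I_4]>>)%VS)
  (s_tab : forall p p', Om e1 (blk_at I s p) (blk_at I s p') = (p.1 == p'.1)%:R * gram p.2 p'.2).

Local Notation n := (size s).

Definition vec (l : lbl n) : 'rV[R]_m :=
  match l with inl b => if b then e2 else e1 | inr p => blk_at I s p end.

Definition dual_coord (p : 'I_n * 'I_4) x := blk_coord I (Om e1) (nth (0, 0) s p.1) p.2 (P x).

Definition dual (l : lbl n) : 'cV[R]_m :=
  match l with inl b => if b then eps2 else eps1 | inr p => form_col (dual_coord p) end.

Definition nu : 'cV[R]_m := form_col (fun x => Om e1 e2 (P x)).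

Lemma scalar_dual_coord p : scalar (dual_coord p).
Proof. exact/scalar_comp_P/scalar_blk_coord/trilinear3. Qed.

Lemma dual_coord_blk_at p p' : dual_coord p' (blk_at I s p) = (p == p')%:R.
Proof.
move: p p' => [k t] [k' t']; rewrite /dual_coord P_id // /blk_coord.
rewrite -[blk _ _ _]/(blk_at I s (k', partner t')) s_tab /gram partnerK /= xpair_eqE eq_sym.
rewrite -mulnb natrM.
have [->|_] := eqVneq t t'; last by rewrite /= !mulr0.
by rewrite /= !mulr1 mulrCA partner_sign_sqr mulr1.
Qed.

Lemma dual_vec l l' : ev (dual l') (vec l) = (l == l')%:R.
Proof.
case: l' => [b'|p']; case: l => [b|p].
- by case: b; case: b'; rewrite /= /eps1 /eps2 ev_mulmx ?tau1_e1 ?tau2_e1 ?tau1_e2 ?tau2_e2.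
- by case: b'; rewrite /= ?eps1_V ?eps2_V.
- rewrite (ev_form_col (scalar_dual_coord p')) /dual_coord.
  apply: (lin_eq0 (scalar_blk_coord I (trilinear3 Om_tri e1) _ _)).
  by case: b; [exact: P_e2 | exact: P_e1].
- by rewrite (ev_form_col (scalar_dual_coord p')) dual_coord_blk_at.
Qed.

Lemma span_blocks : <<[seq vec (inr p) | p : 'I_n * 'I_4]>>%VS = V.
Proof.
apply/eqP; rewrite eqEsubv s_span andbT.
by apply/span_subvP => _ /imageP[p _ ->]; apply: s_in.
Qed.

Lemma vec_basis : basis_of fullv [seq vec l | l : lbl n].
Proof.
rewrite /basis_of eqEsubv subvf /=; apply/andP; split.
  have VX : (V <= <<[seq vec l | l : lbl n]>>)%VS.
    rewrite -span_blocks; apply/span_subvP => _ /imageP[p _ ->].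
    by rewrite memv_span ?image_f.
  apply/subvP => x _; rewrite (decomp_e12 x) rpredD ?(subvP VX _ (P_V x)) //.
  rewrite -[e1]/(vec lE1) -[e2]/(vec lE2) rpredD ?rpredZ ?memv_span //.
  by apply/imageP; exists lE1.
  by apply/imageP; exists lE2.
rewrite -[[seq vec l | l : lbl n]]/(map vec (enum {: lbl n})).
apply: (free_of_duals lE1 (dual := dual)) => [|l l' _ _].
  exact: enum_uniq.
exact: dual_vec.
Qed.

Lemma rank_kermx : \rank (kermx sigma) = (4 * n)%N.
Proof.
have /andP[/eqP spanX /eqP freeX] := vec_basis.
have : \dim (fullv : {vspace 'rV[R]_m}) = m by rewrite dimvf /dim /= mul1n.
rewrite -spanX freeX size_image card_sum card_bool card_prod !card_ord => m_eq.
by rewrite mxrank_ker (eqP sigma_full) -[X in (X - 2)%N]m_eq addKn mulnC.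
Qed.

Lemma nu_e12 : ev nu (vec lE1) = 0 /\ ev nu (vec lE2) = 0.
Proof.
rewrite !(ev_form_col (scalar_comp_P (trilinear3 Om_tri e1 e2))).
by split; apply: (lin_eq0 (trilinear3 Om_tri e1 e2)); [exact: P_e1 | exact: P_e2].
Qed.

Lemma dual_e1 l : ev (dual l) e1 = (lE1 == l)%:R. Proof. exact: (dual_vec lE1). Qed.
Lemma dual_e2 l : ev (dual l) e2 = (lE2 == l)%:R. Proof. exact: (dual_vec lE2). Qed.
Lemma dual_blk_at p l : ev (dual l) (blk_at I s p) = (inr p == l)%:R.
Proof. exact: (dual_vec (inr p)). Qed.

Lemma dual_e12_V v : v \in V -> ev (dual lE1) v = 0 /\ ev (dual lE2) v = 0.
Proof. by move=> vV; split; [exact: eps1_V | exact: eps2_V]. Qed.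

Definition normal_form x y z :=
  \sum_(k < n)
     (  wedge3 (dual (lB1 k)) (dual (lA1 k)) (dual lE2) x y z
      + wedge3 (dual (lB2 k)) (dual (lA2 k)) (dual lE2) x y z
      - (  wedge3 (dual (lB1 k)) (dual (lA2 k)) (dual lE1) x y z
         - wedge3 (dual (lB2 k)) (dual (lA1 k)) (dual lE1) x y z))
  + wedge3 nu (dual lE1) (dual lE2) x y z.

Lemma normal_form_trilinear : trilinear normal_form.
Proof.
apply: trilinear_add; last exact: trilinear_wedge3.
apply: trilinear_sum => k.
by apply: trilinear_sub; [apply: trilinear_add | apply: trilinear_sub]; exact: trilinear_wedge3.
Qed.

Lemma normal_form_alternating : alternating3 normal_form.
Proof.
apply: alternating3_add; last exact: alternating3_wedge3.
apply: alternating3_sum => k.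
by apply: alternating3_sub; [apply: alternating3_add | apply: alternating3_sub];
  exact: alternating3_wedge3.
Qed.

Lemma normal_form_VVV : {in V & V & V, forall u v w, normal_form u v w = 0}.
Proof.
move=> u v w /dual_e12_V[u1 u2] /dual_e12_V[v1 v2] /dual_e12_V[w1 w2].
rewrite /normal_form big1 => [|k _]; first by rewrite add0r wedge3_eq0.
by rewrite !wedge3_eq0 // !(addr0, subr0).
Qed.

Lemma normal_form_e12V : {in V, forall v, normal_form e1 e2 v = Om e1 e2 v}.
Proof.
move=> v vV; have [v1 v2] := dual_e12_V vV; have [nu1 nu2] := nu_e12.
rewrite /normal_form big1 => [|k _]; last by rewrite /wedge3 !dual_e1 !dual_e2 /=; ring.
rewrite add0r /wedge3 !dual_e1 !dual_e2 v1 v2 nu1 nu2 /=.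
rewrite (ev_form_col (scalar_comp_P (trilinear3 Om_tri e1 e2))) P_id //; ring.
Qed.

Definition block_wedge t1 t2 y z :=
  \sum_(k < n) wedge2 (dual (inr (k, t1))) (dual (inr (k, t2))) y z.

Lemma normal_form_V x y z : y \in V -> z \in V ->
  normal_form x y z =
    ev (dual lE2) x * (block_wedge (ord4 2) (ord4 0) y z + block_wedge (ord4 3) (ord4 1) y z)
  - ev (dual lE1) x * (block_wedge (ord4 2) (ord4 1) y z - block_wedge (ord4 3) (ord4 0) y z).
Proof.
move=> /dual_e12_V[y1 y2] /dual_e12_V[z1 z2].
rewrite /normal_form wedge3_expand1 // /wedge2 y1 z1 !mulr0 subrr mulr0 addr0.
rewrite /block_wedge -sumrB -big_split !mulr_sumr -sumrB; apply: eq_bigr => k _.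
by rewrite !wedge3_expand1 //=; ring.
Qed.

Lemma block_wedge_blk_at t1 t2 p p' :
  block_wedge t1 t2 (blk_at I s p) (blk_at I s p') = (p.1 == p'.1)%:R * delta_wedge t1 t2 p.2 p'.2.
Proof.
move: p p' => [k t] [k' t']; rewrite /block_wedge /wedge2 /delta_wedge.
have eq_inr (q q' : 'I_n * 'I_4) : (inr q == inr q' :> lbl n) = (q == q') by [].
under eq_bigr => i _ do rewrite !dual_blk_at !eq_inr !xpair_eqE -!mulnb !natrM.
rewrite (eq_bigr (fun i => (k' == i)%:R * delta_wedge t1 t2 t t' * (i == k)%:R)) => [|i _].
  by rewrite sum_mul_delta /= eq_sym.
rewrite /delta_wedge eq_sym; ring.
Qed.

Lemma normal_form_e1_blk_at p p' :
  normal_form e1 (blk_at I s p) (blk_at I s p') = Om e1 (blk_at I s p) (blk_at I s p').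
Proof.
rewrite normal_form_V // !dual_e1 !block_wedge_blk_at s_tab gramE /=; ring.
Qed.

Lemma normal_form_e2_blk_at p p' :
  normal_form e2 (blk_at I s p) (blk_at I s p') = Om e2 (blk_at I s p) (blk_at I s p').
Proof.
have s_sigma q : blk_at I s q *m sigma = 0 by apply/eqP; rewrite -memV.
rewrite normal_form_V // !dual_e2 !block_wedge_blk_at /e2 Om_mulI ?s_sigma //.
rewrite (blk_mulI I_sqr) (trilinearZ3 Om_tri).
rewrite -[blk _ _ (mulI_index _)]/(blk_at I s (p'.1, mulI_index p'.2)) s_tab.
by rewrite mulrCA gram_mulIE /=; ring.
Qed.

Lemma blocks_bilinear_eq0 (B : 'rV[R]_m -> 'rV[R]_m -> R) :
  (forall x, scalar (B x)) -> (forall y, scalar (B^~ y)) ->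
  (forall p p', B (blk_at I s p) (blk_at I s p') = 0) -> {in V &, forall v w, B v w = 0}.
Proof.
move=> hr hl hB v w; rewrite -span_blocks => vV wV.
by apply: bilinear_span_eq0 vV wV => // _ _ /imageP[p _ ->] /imageP[p' _ ->]; apply: hB.
Qed.

Lemma Om_normal_form x y z : Om x y z = normal_form x y z.
Proof.
apply/eqP; rewrite -subr_eq0; apply/eqP.
have D_tri := trilinear_sub Om_tri normal_form_trilinear.
have D_alt := alternating3_sub Om_alt normal_form_alternating.
apply: (alternating3_eq0_decomp D_tri D_alt (e1 := e1) (e2 := e2) (V := V)).
- by move=> x'; exists (ev eps1 x'), (ev eps2 x'), (P x'); rewrite P_V -decomp_e12.
- move=> u v w uV vV wV; rewrite normal_form_VVV // subr0.
  by apply: Om_ker; apply/eqP; rewrite -memV.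
- apply: blocks_bilinear_eq0 (trilinear3 D_tri e1) (trilinear2 D_tri e1) _ => p p'.
  by rewrite normal_form_e1_blk_at subrr.
- apply: blocks_bilinear_eq0 (trilinear3 D_tri e2) (trilinear2 D_tri e2) _ => p p'.
  by rewrite normal_form_e2_blk_at subrr.
- by move=> v vV; rewrite normal_form_e12V ?subrr.
Qed.

End NormalBasis.
End Setting.

Arguments vec {R m} I sigma s l.
Arguments dual {R m} I j sigma Om s l.

Theorem mainTheorem5 (R : realType) (m : nat)
  (I : 'M[R]_m) (j : 'M[R]_2) (sigma : 'M[R]_(m, 2))
  (Om : 'rV[R]_m -> 'rV[R]_m -> 'rV[R]_m -> R) :
  I *m I = - 1%:M ->
  j *m j = - 1%:M ->
  I *m sigma = sigma *m j ->
  row_full sigma ->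
  trilinear Om -> alternating3 Om ->
  (forall v1 v2 v3 : 'rV[R]_m, v1 *m sigma = 0 -> v2 *m sigma = 0 ->
     v3 *m sigma = 0 -> Om v1 v2 v3 = 0) ->
  (forall xi : 'rV[R]_m, xi *m sigma != 0 ->
     forall v1 : 'rV[R]_m, v1 *m sigma = 0 ->
       (forall v2 : 'rV[R]_m, v2 *m sigma = 0 -> Om xi v1 v2 = 0) -> v1 = 0) ->
  (forall xi v1 v2 : 'rV[R]_m, v1 *m sigma = 0 -> v2 *m sigma = 0 ->
     Om (xi *m I) v1 v2 = - Om xi v1 (v2 *m I)) ->
  exists n : nat,
    \rank (kermx sigma) = (4 * n)%N /\
    exists (vec : lbl n -> 'rV[R]_m) (dual : lbl n -> 'cV[R]_m) (nu : 'cV[R]_m),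
      [/\ basis_of fullv [seq vec l | l : lbl n],
          (forall l l' : lbl n, ev (dual l') (vec l) = (l == l')%:R),
          basis_of fullv [:: vec lE1 *m sigma; vec lE2 *m sigma] &
          (forall x : 'rV[R]_m,
             (x \in <<[seq vec (inr p) | p : 'I_n * 'I_4]>>%VS) = (x *m sigma == 0))] /\
      [/\ vec lE1 *m I = vec lE2,
          (forall k, vec (lA1 k) *m I = vec (lA2 k)),
          (forall k, vec (lB1 k) *m I = - vec (lB2 k)),
          ev nu (vec lE1) = 0 /\ ev nu (vec lE2) = 0 &
          (forall x y z : 'rV[R]_m,
             Om x y z =
               \sum_(k < n)
                  (  wedge3 (dual (lB1 k)) (dual (lA1 k)) (dual lE2) x y z
                   + wedge3 (dual (lB2 k)) (dual (lA2 k)) (dual lE2) x y z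
                   - (  wedge3 (dual (lB1 k)) (dual (lA2 k)) (dual lE1) x y z
                      - wedge3 (dual (lB2 k)) (dual (lA1 k)) (dual lE1) x y z))
               + wedge3 nu (dual lE1) (dual lE2) x y z)].
Proof.
move=> I_sqr j_sqr sigma_mulI sigma_full Om_tri Om_alt Om_ker Om_nondeg Om_mulI.
have [s [s_in s_span s_tab]] := darboux_V I_sqr sigma_mulI sigma_full Om_tri Om_alt
  Om_nondeg Om_mulI.
exists (size s); split; first exact: (rank_kermx (I := I) (j := j) (Om := Om)).
exists (vec I sigma s), (dual I j sigma Om s), (nu I j sigma Om); split; split.
- exact: (vec_basis (j := j) (Om := Om)).
- exact: dual_vec.
- exact: (image_basis (I := I) (j := j)).
- by move=> x; rewrite span_blocks // memV.
- by [].
- by [].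
- by move=> k; rewrite /= opprK.
- exact: nu_e12.
- exact: Om_normal_form.
Qed.
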